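(* Let $k\in\mathbb{N}^\ast$ and let $T_k$ be a random variable with Gamma distribution of shape $k$ and rate $1$. Let $\beta>0$, $K_0>0$ and let $Y$ be a non-negative random variable with $\mathbb{E}[e^{\beta T_k}Y]\le K_0$. Then for every $c_0>1$ and $c_1\in(0,1)$, with probability at least $1-\frac{1}{c_0}-e^{-(c_1-1-\log(c_1))k}$, $$Y\le c_0K_0e^{-\beta c_1k}.$$ *)

From HB Require Import structures.
From mathcomp Require Import all_boot all_order all_algebra.
From mathcomp Require Import all_classical all_reals all_analysis.
Set Implicit Arguments. Unset Strict Implicit. Unset Printing Implicit Defensive.
Import Order.TTheory GRing.Theory Num.Theory.
Import numFieldNormedType.Exports.
Local Open Scope classical_set_scope.
Local Open Scope ring_scope.

Definition gamma_pdf {R : realType} (k : nat) (x : R) : R :=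
  if 0 <= x then x ^+ k.-1 * expR (- x) / (k.-1)`!%:R else 0.

Definition gamma_distributed {R : realType} d (T : measurableType d)
  (P : probability T R) (k : nat) (X : {RV P >-> R}) : Prop :=
  forall A : set R, measurable A ->
    distribution P X A = (\int[lebesgue_measure]_(x in A) (gamma_pdf k x)%:E)%E.
Arguments gamma_distributed {R d T} P k X.

(** If [Y > c0 K0 e^(-beta c1 k)] then either [Tk < c1 k] or
    [e^(beta Tk) Y >= c0 K0]. Markov's inequality bounds the probability of the
    second event by [1/c0]; the first is bounded by a Chernoff argument:
    tilting the Gamma(k, 1) density by [e^(theta (c1 k - x))] with
    [theta = 1/c1 - 1] yields [e^(-(c1 - 1 - log c1) k)] times the
    Gamma(k, 1/c1) density, whose integral is 1. *)

From HB Require Import structures.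
From mathcomp Require Import all_boot all_order all_algebra.
From mathcomp Require Import all_classical all_reals all_analysis.
From mathcomp Require Import measurable_realfun ring lra.
Set Implicit Arguments. Unset Strict Implicit. Unset Printing Implicit Defensive.
Import Order.TTheory GRing.Theory Num.Theory.
Import numFieldNormedType.Exports.
Local Open Scope classical_set_scope.
Local Open Scope ring_scope.

Section gamma_density.
Context {R : realType}.
Implicit Types (k : nat) (x c : R).

Definition gamma_density k x : R := x ^+ k.-1 * expR (- x) / (k.-1)`!%:R.

Lemma gamma_pdfE k : gamma_pdf k = gamma_density k \_ `[0, +oo[.
Proof.
apply/funext => x; rewrite patchE /gamma_pdf mem_setE in_itv /= andbT.
by case: ifPn.
Qed.

Lemma continuous_gamma_density k : continuous (gamma_density k).
Proof.
move=> x; apply: (@continuousM _ R^o (fun x => x ^+ k.-1 * expR (- x)) (cst _)).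
  apply: (@continuousM _ R^o (fun x => x ^+ k.-1) (fun x => expR (- x))).
    exact: exprn_continuous.
  by apply: continuous_comp; [exact: (@continuousN _ R^o)|exact: continuous_expR].
exact: cst_continuous.
Qed.

Lemma gamma_density_ge0 k x : 0 <= x -> 0 <= gamma_density k x.
Proof. by move=> x0; rewrite !mulr_ge0 ?exprn_ge0 ?expR_ge0 ?invr_ge0. Qed.

Lemma gamma_pdf_ge0 k x : 0 <= gamma_pdf k x.
Proof. by rewrite /gamma_pdf; case: ifPn => // /(gamma_density_ge0 k). Qed.

Lemma measurable_gamma_pdf k : measurable_fun [set: R] (gamma_pdf k).
Proof.
rewrite gamma_pdfE; apply/measurable_restrict => //; apply: measurable_funTS.
exact: continuous_measurable_fun (@continuous_gamma_density k).
Qed.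

Lemma gamma_density_tilt k c x : (0 < k)%N -> 0 < c ->
  expR ((c^-1 - 1) * (c * k%:R - x)) * gamma_density k x =
  expR (- (c - 1 - ln c) * k%:R) * (gamma_density k (c^-1 * x) * c^-1).
Proof.
case: k => // n _ c0; rewrite /gamma_density /=.
have cn0 : c != 0 by rewrite gt_eqF.
have -> : expR (- (c - 1 - ln c) * n.+1%:R) =
          expR ((1 - c) * n.+1%:R) * c ^+ n.+1.
  have -> : c ^+ n.+1 = expR (n.+1%:R * ln c) by rewrite expRM_natl lnK ?posrE.
  by rewrite -expRD; congr expR; ring.
have -> : expR ((c^-1 - 1) * (c * n.+1%:R - x)) =
          expR ((1 - c) * n.+1%:R) * expR (x - c^-1 * x).
  by rewrite -expRD; congr expR; field.
rewrite exprMn exprVn exprS expRD !expRN; field.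
by rewrite cn0 expf_neq0 // pnatr_eq0 -lt0n fact_gt0 !gt_eqF ?expR_gt0.
Qed.

End gamma_density.

Section integral_scale.
Context {R : realType}.
Local Notation mu := (@lebesgue_measure R).

Lemma ge0_integral_itv0y_scale (f : R -> R) (c : R) : 0 < c ->
  {within `[0%R, +oo[, continuous f} -> {in `]0%R, +oo[, forall x, 0 <= f x} ->
  (\int[mu]_(x in `[0%R, +oo[) (f x)%:E =
   \int[mu]_(x in `[0%R, +oo[) (f (c * x) * c)%:E)%E.
Proof.
move=> c0 cf f0.
have dF x : derivable ( *%R c) x 1 by apply: derivableM => //; exact: derivable_id.
have F' : ( *%R c)^`()%classic = cst c.
  by apply/funext => x; rewrite derive1Ml ?derive1_id ?mulr1 //; exact: derivable_id.
have := @increasing_ge0_integration_by_substitutiony R ( *%R c) f 0.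
rewrite mulr0 => ->; rewrite ?F' //.
- by move=> x y _ _ xy; rewrite ltr_pM2l.
- by move=> x _; exact: cst_continuous.
- exact: is_cvg_cst.
- exact: is_cvg_cst.
- split=> [x _|]; first exact: dF.
  by apply: cvg_at_right_filter; apply: continuousM => //; exact: cst_continuous.
- by apply: gt0_cvgMry => //; exact: cvg_id.
Qed.

End integral_scale.

Section gamma_distribution.
Context {R : realType} d {T : measurableType d} (P : probability T R).
Local Notation mu := (@lebesgue_measure R).

Lemma integral_gamma_pdf k (h : R -> R) :
  (\int[mu]_x (h x * gamma_pdf k x)%:E =
   \int[mu]_(x in `[0%R, +oo[) (h x * gamma_density k x)%:E)%E.
Proof.
rewrite [RHS]integral_mkcond; apply: eq_integral => x _.
by rewrite gamma_pdfE !patchE; case: ifPn; rewrite ?mulr0.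
Qed.

Lemma integral_gamma_density k (X : {RV P >-> R}) :
  gamma_distributed P k X ->
  (\int[mu]_(x in `[0%R, +oo[) (gamma_density k x)%:E = 1)%E.
Proof.
move=> HX; have := HX setT measurableT; rewrite probability_setT => ->.
transitivity (\int[mu]_x (cst 1 x * gamma_pdf k x)%:E)%E.
  by rewrite integral_gamma_pdf; apply: eq_integral => x _; rewrite mul1r.
by apply: eq_integral => x _; rewrite mul1r.
Qed.

Lemma integral_expR_gamma_pdf k (X : {RV P >-> R}) (c : R) :
  (0 < k)%N -> gamma_distributed P k X -> 0 < c ->
  (\int[mu]_x (expR ((c^-1 - 1) * (c * k%:R - x)) * gamma_pdf k x)%:E =
   (expR (- (c - 1 - ln c) * k%:R))%:E)%E.
Proof.
move=> k0 HX c0.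
have cV_ge0 : 0 <= c^-1 by rewrite invr_ge0 ltW.
rewrite integral_gamma_pdf.
under eq_integral do rewrite gamma_density_tilt // EFinM.
rewrite ge0_integralZl_EFin ?expR_ge0 //.
- rewrite -ge0_integral_itv0y_scale ?invr_gt0 //.
  + by rewrite (integral_gamma_density HX) mule1.
  + exact/continuous_subspaceT/continuous_gamma_density.
  + by move=> x; rewrite in_itv /= andbT => /ltW; exact: gamma_density_ge0.
- move=> x; rewrite /= in_itv /= andbT => x0.
  by rewrite lee_fin mulr_ge0 ?gamma_density_ge0 ?mulr_ge0.
- apply/measurable_funTS/measurable_EFinP/measurable_funM => //.
  apply: continuous_measurable_fun => x; apply: continuous_comp.
    by apply: (@continuousM _ R^o (cst c^-1) id); [exact: cst_continuous|exact: cvg_id].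
  exact: continuous_gamma_density.
Qed.

Lemma gamma_lower_tail k (X : {RV P >-> R}) (c : R) :
  (0 < k)%N -> gamma_distributed P k X -> 0 < c <= 1 ->
  (P [set w | (X w < c * k%:R)%R] <= (expR (- (c - 1 - ln c) * k%:R))%:E)%E.
Proof.
move=> k0 HX /andP[c0 c1].
set a := c * k%:R; pose h x := expR ((c^-1 - 1) * (a - x)).
have mh : measurable_fun [set: R] h.
  apply: continuous_measurable_fun => x.
  apply: continuous_comp; last exact: continuous_expR.
  apply: (@continuousM _ R^o (cst _) (fun x => a - x)); first exact: cst_continuous.
  by apply: (@continuousB _ R^o R^o (cst a) id); [exact: cst_continuous|exact: cvg_id].
have mhpdf : measurable_fun [set: R] (EFin \o (fun x => h x * gamma_pdf k x)).
  by apply/measurable_EFinP/measurable_funM => //; exact: measurable_gamma_pdf.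
rewrite -(integral_expR_gamma_pdf k0 HX c0) -preimage_itvNyo.
change (distribution P X `]-oo, a[ <= \int[mu]_x (h x * gamma_pdf k x)%:E)%E.
rewrite HX //; apply: (@le_trans _ _ (\int[mu]_(x in `]-oo, a[) (h x * gamma_pdf k x)%:E)%E).
  apply: ge0_le_integral => //.
  - by move=> x _; rewrite lee_fin gamma_pdf_ge0.
  - by apply/measurable_funTS/measurable_EFinP; exact: measurable_gamma_pdf.
  - exact: measurable_funTS.
  move=> x; rewrite /= in_itv /= => xa; rewrite lee_fin ler_peMl ?gamma_pdf_ge0 //.
  have th0 : 0 <= c^-1 - 1 by rewrite subr_ge0 invf_ge1.
  by apply: le_trans (expR_ge1Dx _); rewrite lerDl mulr_ge0 // subr_ge0 ltW.
apply: ge0_subset_integral => //.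
by move=> x _; rewrite lee_fin mulr_ge0 ?expR_ge0 ?gamma_pdf_ge0.
Qed.

End gamma_distribution.

Lemma markov_ge0 d (T : measurableType d) (R : realType)
    (mu : {measure set T -> \bar R}) (f : T -> R) (a : R) :
  0 < a -> measurable_fun [set: T] f -> (forall x, 0 <= f x) ->
  (a%:E * mu [set x | (a <= f x)%R] <= \int[mu]_x (f x)%:E)%E.
Proof.
move=> a0 mf f0.
have absf x : `|(f x)%:E|%E = (f x)%:E by rewrite gee0_abs ?lee_fin.
have -> : [set x | (a <= f x)%R] = [set x | a%:E <= `|(f x)%:E|]%E.
  by apply: eq_set => x; rewrite absf lee_fin.
rewrite -[X in mu X]setTI.
under eq_integral do rewrite -absf.
apply: (@le_integral_comp_abse _ _ _ mu _ measurableT (EFin \o f) a id) => //.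
exact/measurable_EFinP.
Qed.

Lemma union_bound_setC d (T : measurableType d) (R : realType)
    (P : probability T R) (A1 A2 B : set T) (p1 p2 : R) :
  measurable A1 -> measurable A2 -> measurable B -> ~` B `<=` A1 `|` A2 ->
  (P A1 <= p1%:E)%E -> (P A2 <= p2%:E)%E -> ((1 - p1 - p2)%:E <= P B)%E.
Proof.
move=> mA1 mA2 mB BA PA1 PA2.
have PBC : (P (~` B) <= (p1 + p2)%:E)%E.
  have mA12 : measurable (A1 `|` A2) by exact: measurableU.
  apply: le_trans (le_measure P _ _ BA) _; rewrite ?inE //; first exact: measurableC.
  by rewrite EFinD; apply: le_trans (measureU2 P mA1 mA2) _; exact: leeD.
move: PBC; rewrite probability_setC // -(fineK (fin_num_measure P _ mB)).
by rewrite -EFinB !lee_fin; lra.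
Qed.

Lemma le_expRM_of_lt (R : realType) (b s t y M : R) :
  0 <= b -> 0 <= M -> s <= t -> M * expR (- (b * s)) < y -> M <= expR (b * t) * y.
Proof.
move=> b0 M0 st My.
have y0 : 0 < y by apply: le_lt_trans My; rewrite mulr_ge0 ?expR_ge0.
rewrite -ltr_pdivlMr ?expR_gt0 // -expRN in My.
apply/ltW/(lt_le_trans My); rewrite mulrC ler_pM2r // ler_expR opprK.
exact: ler_wpM2l.
Qed.

Theorem proposition4 (R : realType) (d : measure_display) (Omega : measurableType d)
  (P : probability Omega R) (k : nat) (Tk Y : {RV P >-> R})
  (beta K0 : R) :
  (0 < k)%N ->
  gamma_distributed P k Tk ->
  0 < beta -> 0 < K0 ->
  (forall w, 0 <= Y w) ->
  ('E_P[fun w => (expR (beta * Tk w) * Y w)%R] <= K0%:E)%E ->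
  forall c0 c1 : R, 1 < c0 -> 0 < c1 < 1 ->
  ((1 - c0^-1 - expR (- (c1 - 1 - ln c1) * k%:R))%:E
     <= P [set w | (Y w <= c0 * K0 * expR (- beta * c1 * k%:R))%R])%E.
Proof.
move=> k0 HT beta0 K00 Y0 HE c0 c1 c01 /andP[c1_gt0 c1_lt1].
have c0K0 : 0 < c0 * K0 by rewrite mulr_gt0 // (lt_trans ltr01).
pose Z w := expR (beta * Tk w) * Y w.
have mZ : measurable_fun [set: Omega] Z.
  by apply: measurable_funM => //; apply: measurableT_comp => //; exact: measurable_funM.
have PZ : (P [set w | (c0 * K0 <= Z w)%R] <= c0^-1%:E)%E.
  have -> : c0^-1 = (c0 * K0)^-1 * K0 by rewrite invfM mulfVK // lt0r_neq0.
  rewrite EFinM lee_pdivlMl //.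
  apply: le_trans (markov_ge0 P c0K0 mZ _) _; first by move=> w; rewrite mulr_ge0 ?expR_ge0.
  by move: HE; rewrite unlock.
apply: union_bound_setC PZ (gamma_lower_tail k0 HT _) => //.
- by rewrite -preimage_itvcy -[_ @^-1` _]setTI; exact: mZ.
- by rewrite -preimage_itvNyo; exact: measurable_funPTI.
- by rewrite -preimage_itvNyc; exact: measurable_funPTI.
- move=> w /= /negP; rewrite -ltNge -[- beta * c1 * _]mulrA mulNr => YW.
  have [Tw|Tw] := ltP (Tk w) (c1 * k%:R); [by right|left].
  exact: le_expRM_of_lt (ltW beta0) (ltW c0K0) Tw YW.
- by rewrite c1_gt0 ltW.
Qed.
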